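(* Let $\mathcal{A}$ be a computably enumerable set of axioms (coded as natural numbers). Define $C\subseteq\omega$ by $$y\in C \iff \exists l\in\omega\ \exists \sigma\subseteq C\ \bigl[(l,\sigma,y)\in\mathcal{A}\bigr],$$ where $\sigma\subseteq C$ means that $\sigma$ agrees with the characteristic function of $C$ on $\mathrm{dom}\,\sigma$. Then $C$ is well defined and is $\mathrm{REA}[\omega]$.
   Context: Let $\langle x,y\rangle$ denote a standard computable pairing function; $\omega^{[<l]}=\{\langle m,y\rangle: m<l\}$ and $\omega^{[\ge l]}=\{\langle m,y\rangle: m\ge l\}$. An axiom is a triple $(l,\sigma,y)$ where $l\in\omega$, $\sigma$ is a function from a finite subset of $\omega^{[<l]}$ to $\{0,1\}$, and $y\in\omega^{[\ge l]}$. For $X\subseteq\omega$, $X^{[n]}=\{y:\langle n,y\rangle\in X\}$ and $X^{[<n]}=\{\langle m,y\rangle\in X:m<n\}$. $W_e^Z$ is the $e$-th set c.e. relative to $Z$. A set $C$ is $\mathrm{REA}[\omega]$ iff there is a computable function $f$ such that for every $n$, $C^{[n]}=W^{C^{[<n]}}_{f(n)}$. *)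

From HB Require Import structures.
From mathcomp Require Import all_boot.
Set Implicit Arguments. Unset Strict Implicit. Unset Printing Implicit Defensive.

Definition pair (x y : nat) : nat := ((x + y) * (x + y).+1) %/ 2 + y.

Inductive prog : Type :=
| PZero
| PSucc
| PId
| PFst
| PSnd
| POracle
| PComp of prog & prog
| PPair of prog & prog
| PRec of prog & prog
| PMu of prog.

Inductive eval (Z : nat -> Prop) : prog -> nat -> nat -> Prop :=
| ev_zero x : eval Z PZero x 0
| ev_succ x : eval Z PSucc x x.+1
| ev_id x : eval Z PId x x
| ev_fst a b : eval Z PFst (pair a b) a
| ev_snd a b : eval Z PSnd (pair a b) b
| ev_orac1 x : Z x -> eval Z POracle x 1
| ev_orac0 x : ~ Z x -> eval Z POracle x 0
| ev_comp f g x w v : eval Z g x w -> eval Z f w v -> eval Z (PComp f g) x v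
| ev_pair f g x v w : eval Z f x v -> eval Z g x w -> eval Z (PPair f g) x (pair v w)
| ev_rec0 f g a v : eval Z f a v -> eval Z (PRec f g) (pair a 0) v
| ev_recS f g a n w v : eval Z (PRec f g) (pair a n) w ->
    eval Z g (pair a (pair n w)) v -> eval Z (PRec f g) (pair a n.+1) v
| ev_mu f a n : eval Z f (pair a n) 0 ->
    (forall m, m < n -> exists k, eval Z f (pair a m) k.+1) ->
    eval Z (PMu f) a n.

Fixpoint prog_enc (p : prog) : GenTree.tree nat :=
  match p with
  | PZero => GenTree.Node 0 [::]
  | PSucc => GenTree.Node 1 [::]
  | PId => GenTree.Node 2 [::]
  | PFst => GenTree.Node 3 [::]
  | PSnd => GenTree.Node 4 [::]
  | POracle => GenTree.Node 5 [::]
  | PComp f g => GenTree.Node 6 [:: prog_enc f; prog_enc g]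
  | PPair f g => GenTree.Node 7 [:: prog_enc f; prog_enc g]
  | PRec f g => GenTree.Node 8 [:: prog_enc f; prog_enc g]
  | PMu f => GenTree.Node 9 [:: prog_enc f]
  end.

Fixpoint prog_dec (t : GenTree.tree nat) : option prog :=
  match t with
  | GenTree.Leaf _ => None
  | GenTree.Node 0 [::] => Some PZero
  | GenTree.Node 1 [::] => Some PSucc
  | GenTree.Node 2 [::] => Some PId
  | GenTree.Node 3 [::] => Some PFst
  | GenTree.Node 4 [::] => Some PSnd
  | GenTree.Node 5 [::] => Some POracle
  | GenTree.Node 6 [:: t1; t2] =>
      if (prog_dec t1, prog_dec t2) is (Some f, Some g) then Some (PComp f g) else None
  | GenTree.Node 7 [:: t1; t2] =>
      if (prog_dec t1, prog_dec t2) is (Some f, Some g) then Some (PPair f g) else None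
  | GenTree.Node 8 [:: t1; t2] =>
      if (prog_dec t1, prog_dec t2) is (Some f, Some g) then Some (PRec f g) else None
  | GenTree.Node 9 [:: t1] =>
      if prog_dec t1 is Some f then Some (PMu f) else None
  | _ => None
  end.

Lemma prog_encK : pcancel prog_enc prog_dec.
Proof. by elim=> //= [f -> g -> | f -> g -> | f -> g -> | f ->]. Qed.

HB.instance Definition _ := Countable.copy prog (pcan_type prog_encK).

Definition phi (e : nat) : prog := odflt PZero (unpickle e).

Definition W (e : nat) (Z : nat -> Prop) : nat -> Prop :=
  fun x => exists v, eval Z (phi e) x v.

Definition empty_oracle : nat -> Prop := fun _ => False.

Definition ce (A : nat -> Prop) : Prop :=
  exists e, forall x, A x <-> W e empty_oracle x.

Definition computable (f : nat -> nat) : Prop :=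
  exists e, forall n, eval empty_oracle (phi e) n (f n).

Definition col_lt (l : nat) : nat -> Prop := fun x => exists m y, x = pair m y /\ m < l.
Definition col_ge (l : nat) : nat -> Prop := fun x => exists m y, x = pair m y /\ l <= m.
Definition column (X : nat -> Prop) (n : nat) : nat -> Prop := fun y => X (pair n y).
Definition below (X : nat -> Prop) (n : nat) : nat -> Prop := fun x => X x /\ col_lt n x.

(* a finite partial function sigma from a finite subset of omega to {0,1}
   is given by a list of (argument, value) pairs with distinct arguments *)
Definition valid_axiom (l : nat) (sigma : seq (nat * bool)) (y : nat) : Prop :=
  uniq (unzip1 sigma) /\ (forall x b, (x, b) \in sigma -> col_lt l x) /\ col_ge l y.

Fixpoint fun_code (sigma : seq (nat * bool)) : nat :=
  match sigma with
  | [::] => 0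
  | (x, b) :: s => (pair (pair x (nat_of_bool b)) (fun_code s)).+1
  end.

Definition axiom_code (l : nat) (sigma : seq (nat * bool)) (y : nat) : nat :=
  pair l (pair (fun_code sigma) y).

Definition agrees (sigma : seq (nat * bool)) (C : nat -> Prop) : Prop :=
  forall x b, (x, b) \in sigma -> (C x <-> b = true).

Definition generated_by (A : nat -> Prop) (C : nat -> Prop) : Prop :=
  forall y, C y <-> exists l sigma, A (axiom_code l sigma y) /\ agrees sigma C.

Definition REA_omega (C : nat -> Prop) : Prop :=
  exists f, computable f /\
    forall n y, column C n y <-> W (f n) (below C n) y.

From mathcomp Require Import all_boot zify.
From Stdlib Require Import Classical ClassicalEpsilon.
Set Implicit Arguments. Unset Strict Implicit. Unset Printing Implicit Defensive.

(* An axiom for an element of column [m] only mentions elements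
   of columns [< m], so the defining equivalence determines [C] column by
   column: this gives existence and uniqueness.  For REA[omega], [y] enters
   column [n] iff some enumerated axiom [(l, sigma, <n, y>)] has [sigma]
   agreeing with the oracle [C^[<n]]; this is an unbounded search over pairs
   (axiom code, enumeration time), carried out by one oracle program in which
   the enumeration of the axioms is simulated by a clocked interpreter.  The
   index of the program for column [n] is obtained from [n] by an explicit
   computation on Goedel codes (a hand-made s-m-n theorem). *)

(** * Pairing *)

Definition tri (s : nat) := (s * s.+1) %/ 2.

Lemma pairE x y : pair x y = tri (x + y) + y.
Proof. by []. Qed.

Lemma triS s : tri s.+1 = tri s + s.+1.
Proof.
rewrite /tri.
have -> : s.+1 * s.+2 = s * s.+1 + s.+1 * 2 by rewrite !mulSn !mulnS; lia.
by rewrite divnDr ?dvdn_mull // mulnK.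
Qed.

Lemma leq_tri s t : s <= t -> tri s <= tri t.
Proof.
elim: t => [|t IH]; first by rewrite leqn0 => /eqP->.
rewrite leq_eqVlt => /orP[/eqP->//|]; rewrite ltnS => /IH.
rewrite triS; lia.
Qed.

Lemma ltn_pair a b c d : a + b < c + d -> pair a b < pair c d.
Proof. by move=> H; rewrite !pairE; have := leq_tri H; rewrite triS; lia. Qed.

Lemma pair_inj a b c d : pair a b = pair c d -> a = c /\ b = d.
Proof.
move=> E.
have Hs : a + b = c + d.
  by case: (ltngtP (a + b) (c + d)) => // /ltn_pair; rewrite E ltnn.
move: E; rewrite !pairE Hs => /addnI Hbd; split; lia.
Qed.

Lemma pair_ge_r a b : b <= pair a b.
Proof. rewrite pairE; lia. Qed.

(* [unpair] walks the diagonals of the Cantor enumeration. *)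
Definition unpair_step (p : nat * nat) : nat * nat :=
  if p.1 is a.+1 then (a, p.2.+1) else (p.2.+1, 0).
Definition unpair (x : nat) : nat * nat := iter x unpair_step (0, 0).
Definition pi1 x := (unpair x).1.
Definition pi2 x := (unpair x).2.

Lemma pair_unpair_step p :
  pair (unpair_step p).1 (unpair_step p).2 = (pair p.1 p.2).+1.
Proof.
case: p => [[|a] b] /=; rewrite !pairE.
- by rewrite ?addn0 ?add0n triS; lia.
- have -> : a + b.+1 = (a + b).+1 by lia. by rewrite addSn addnS.
Qed.

Lemma pair_pi x : pair (pi1 x) (pi2 x) = x.
Proof.
rewrite /pi1 /pi2 /unpair; elim: x => [|x IH] //=.
by rewrite pair_unpair_step IH.
Qed.

Lemma unpair_pair a b : unpair (pair a b) = (a, b).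
Proof.
have /pair_inj [] := pair_pi (pair a b); rewrite /pi1 /pi2.
by case: (unpair _) => ? ? /= -> ->.
Qed.

Lemma pi1_pair a b : pi1 (pair a b) = a.
Proof. by rewrite /pi1 unpair_pair. Qed.
Lemma pi2_pair a b : pi2 (pair a b) = b.
Proof. by rewrite /pi2 unpair_pair. Qed.

Lemma col_lt_iff l x : col_lt l x <-> pi1 x < l.
Proof.
split; first by move=> [m [y [-> h]]]; rewrite pi1_pair.
by move=> h; exists (pi1 x), (pi2 x); rewrite pair_pi.
Qed.

Lemma col_ge_iff l x : col_ge l x <-> l <= pi1 x.
Proof.
split; first by move=> [m [y [-> h]]]; rewrite pi1_pair.
by move=> h; exists (pi1 x), (pi2 x); rewrite pair_pi.
Qed.

Definition obit (Z : nat -> Prop) (x : nat) : nat :=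
  if excluded_middle_informative (Z x) then 1 else 0.

Lemma obit_true Z x : Z x -> obit Z x = 1.
Proof. by rewrite /obit; case: excluded_middle_informative. Qed.
Lemma obit_false Z x : ~ Z x -> obit Z x = 0.
Proof. by rewrite /obit; case: excluded_middle_informative. Qed.

Lemma eval_conv Z p x v w : eval Z p x v -> v = w -> eval Z p x w.
Proof. by move=> H <-. Qed.

Lemma eval_pi1 Z x : eval Z PFst x (pi1 x).
Proof. rewrite -{1}(pair_pi x); constructor. Qed.
Lemma eval_pi2 Z x : eval Z PSnd x (pi2 x).
Proof. rewrite -{1}(pair_pi x); constructor. Qed.
Lemma eval_obit Z x : eval Z POracle x (obit Z x).
Proof. rewrite /obit; case: excluded_middle_informative => h; by constructor. Qed.

Lemma eval_PFst_inv Z x v : eval Z PFst x v -> v = pi1 x.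
Proof. by inversion 1; rewrite pi1_pair. Qed.
Lemma eval_PSnd_inv Z x v : eval Z PSnd x v -> v = pi2 x.
Proof. by inversion 1; rewrite pi2_pair. Qed.
Lemma eval_POracle_inv Z x v : eval Z POracle x v -> v = obit Z x.
Proof. by inversion 1; subst; rewrite /obit; case: excluded_middle_informative. Qed.
Lemma eval_PComp_inv Z f g x v :
  eval Z (PComp f g) x v -> exists w, eval Z g x w /\ eval Z f w v.
Proof. inversion 1; eauto. Qed.
Lemma eval_PPair_inv Z f g x v : eval Z (PPair f g) x v ->
  exists a b, [/\ eval Z f x a, eval Z g x b & v = pair a b].
Proof. inversion 1; subst; do 2 eexists; split; eauto. Qed.
Lemma eval_PRec_inv Z f g a n v : eval Z (PRec f g) (pair a n) v ->
  (n = 0 /\ eval Z f a v) \/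
  (exists k w, [/\ n = k.+1, eval Z (PRec f g) (pair a k) w
                 & eval Z g (pair a (pair k w)) v]).
Proof.
inversion 1; subst;
  match goal with h : pair _ _ = pair _ _ |- _ => case/pair_inj: h => ? ?; subst end.
- by left.
- by right; do 2 eexists; split; eauto.
Qed.
Lemma eval_PMu_inv Z f a n : eval Z (PMu f) a n ->
  eval Z f (pair a n) 0 /\ (forall m, m < n -> exists k, eval Z f (pair a m) k.+1).
Proof. by inversion 1. Qed.

Lemma eval_fun Z p x v1 v2 : eval Z p x v1 -> eval Z p x v2 -> v1 = v2.
Proof.
elim: p x v1 v2 => [||||||f IHf g IHg|f IHf g IHg|f IHf g IHg|f IHf] x v1 v2.
- by do 2 inversion 1.
- by do 2 inversion 1.
- by do 2 inversion 1.
- by move=> /eval_PFst_inv -> /eval_PFst_inv ->.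
- by move=> /eval_PSnd_inv -> /eval_PSnd_inv ->.
- by move=> /eval_POracle_inv -> /eval_POracle_inv ->.
- move=> /eval_PComp_inv [w1 [h1 h1']] /eval_PComp_inv [w2 [h2 h2']].
  by move: h1'; rewrite (IHg _ _ _ h1 h2) => /IHf; apply.
- move=> /eval_PPair_inv [a1 [b1 [h1 h1' ->]]] /eval_PPair_inv [a2 [b2 [h2 h2' ->]]].
  by rewrite (IHf _ _ _ h1 h2) (IHg _ _ _ h1' h2').
- rewrite -(pair_pi x); move: (pi1 x) (pi2 x) => a n.
  elim: n v1 v2 => [|n IHn] v1 v2.
  + move=> /eval_PRec_inv [[_ h1]|[k [w [//]]]].
    by move=> /eval_PRec_inv [[_ h2]|[k [w [//]]]]; apply: IHf h1 h2.
  + move=> /eval_PRec_inv [[//]|[k [w [[<-] h1 h1']]]].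
    move=> /eval_PRec_inv [[//]|[k' [w' [[<-] h2 h2']]]].
    by move: h1'; rewrite (IHn _ _ h1 h2) => /IHg; apply.
- move=> /eval_PMu_inv [h1 h1'] /eval_PMu_inv [h2 h2'].
  case: (ltngtP v1 v2) => // H.
  + by case: (h2' _ H) => k /(IHf _ _ _ h1).
  + by case: (h1' _ H) => k /(IHf _ _ _ h2).
Qed.

Definition pcomp2 h f g := PComp h (PPair f g).
Fixpoint pconst (n : nat) : prog := if n is k.+1 then PComp PSucc (pconst k) else PZero.

Notation pfst2 := (PComp PFst PFst).
Notation psnd_fst := (PComp PSnd PFst).
Notation pfst_snd := (PComp PFst PSnd).
Notation psnd2 := (PComp PSnd PSnd).

Lemma eval_pcomp2 Z h f g x a b c : eval Z f x a -> eval Z g x b ->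
  eval Z h (pair a b) c -> eval Z (pcomp2 h f g) x c.
Proof. by move=> ha hb hc; econstructor; [econstructor; eauto | exact hc]. Qed.

Lemma eval_pconst Z n x : eval Z (pconst n) x n.
Proof. by elim: n => [|n IH] /=; [constructor | econstructor; [exact IH | constructor]]. Qed.

Fixpoint primrec (F : nat -> nat) (G : nat -> nat -> nat -> nat) a n :=
  if n is k.+1 then G a k (primrec F G a k) else F a.

Lemma primrec_iter (F : nat -> nat) (h : nat -> nat) a n :
  primrec F (fun _ _ st => h st) a n = iter n h (F a).
Proof. by elim: n => //= n ->. Qed.

Lemma eval_PRec Z f g F G :
  (forall a, eval Z f a (F a)) ->
  (forall a k w, eval Z g (pair a (pair k w)) (G a k w)) ->
  forall a n, eval Z (PRec f g) (pair a n) (primrec F G a n).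
Proof.
move=> hf hg a; elim=> [|n IH] /=; first by constructor.
by econstructor; [exact IH | exact: hg].
Qed.

Lemma eval_PRec0 Z f g F G x :
  (forall a, eval Z f a (F a)) ->
  (forall a k w, eval Z g (pair a (pair k w)) (G a k w)) ->
  eval Z (PComp (PRec f g) (PPair PZero PId)) x (primrec F G 0 x).
Proof.
by move=> hf hg; econstructor; [econstructor; constructor | exact: eval_PRec].
Qed.

Create HintDb evaldb.
#[export] Hint Resolve ev_zero ev_succ ev_id eval_pi1 eval_pi2 eval_obit eval_pconst : evaldb.
#[export] Hint Extern 2 (eval _ (pcomp2 _ _ _) _ _) => eapply eval_pcomp2 : evaldb.
#[export] Hint Extern 3 (eval _ (PComp _ _) _ _) => eapply ev_comp : evaldb.
#[export] Hint Extern 3 (eval _ (PPair _ _) _ _) => eapply ev_pair : evaldb.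

Ltac simpl_pi := repeat first [rewrite pi1_pair | rewrite pi2_pair].
Ltac eval_prog :=
  eapply eval_conv; [solve [eauto 40 with evaldb] | simpl_pi; try lia; try done].

Definition padd := PRec PId (PComp PSucc psnd2).
Lemma eval_padd Z a n : eval Z padd (pair a n) (a + n).
Proof.
eapply eval_conv.
  by apply: (eval_PRec (F := id) (G := fun a k w => w.+1)) => *; eval_prog.
by elim: n => /= [|n ->]; lia.
Qed.
#[export] Hint Resolve eval_padd : evaldb.

Definition pmul := PRec PZero (pcomp2 padd psnd2 PFst).
Lemma eval_pmul Z a n : eval Z pmul (pair a n) (a * n).
Proof.
eapply eval_conv.
  by apply: (eval_PRec (F := fun=> 0) (G := fun a k w => w + a)) => *; eval_prog.
by elim: n => /= [|n ->]; lia.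
Qed.
#[export] Hint Resolve eval_pmul : evaldb.

Definition ppred := PComp (PRec PZero pfst_snd) (PPair PZero PId).
Lemma eval_ppred Z x : eval Z ppred x x.-1.
Proof.
eapply eval_conv.
  by apply: (eval_PRec0 (F := fun=> 0) (G := fun a k w => k)) => *; eval_prog.
by case: x.
Qed.
#[export] Hint Resolve eval_ppred : evaldb.

Definition psub := PRec PId (PComp ppred psnd2).
Lemma eval_psub Z a n : eval Z psub (pair a n) (a - n).
Proof.
eapply eval_conv.
  by apply: (eval_PRec (F := id) (G := fun a k w => w.-1)) => *; eval_prog.
by elim: n => //= [|n ->]; lia.
Qed.
#[export] Hint Resolve eval_psub : evaldb.

Definition sgn (x : nat) : nat := (0 < x).
Definition psgn := PComp (PRec PZero (pconst 1)) (PPair PZero PId).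
Lemma eval_psgn Z x : eval Z psgn x (sgn x).
Proof.
eapply eval_conv.
  by apply: (eval_PRec0 (F := fun=> 0) (G := fun a k w => 1)) => *; eval_prog.
by case: x.
Qed.
#[export] Hint Resolve eval_psgn : evaldb.

Definition pnot h := pcomp2 psub (pconst 1) h.

Definition eqb (a b : nat) : nat := (a == b).
Definition peqb := pnot (PComp psgn (pcomp2 padd psub (pcomp2 psub PSnd PFst))).
Lemma eval_peqb Z a b : eval Z peqb (pair a b) (eqb a b).
Proof.
rewrite /peqb /pnot /eqb; eval_prog.
by rewrite /sgn; case: (ltngtP a b) => h; try lia; rewrite h subnn.
Qed.
#[export] Hint Resolve eval_peqb : evaldb.

Lemma eqb_le1 a b : eqb a b <= 1.
Proof. by rewrite /eqb; case: (a == b). Qed.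

Definition pexp2 := PComp (PRec (pconst 1) (pcomp2 padd psnd2 psnd2)) (PPair PZero PId).
Lemma eval_pexp2 Z x : eval Z pexp2 x (2 ^ x).
Proof.
eapply eval_conv.
  by apply: (eval_PRec0 (F := fun=> 1) (G := fun a k w => w + w)) => *; eval_prog.
by elim: x => /= [|x ->]; rewrite ?expnS; lia.
Qed.
#[export] Hint Resolve eval_pexp2 : evaldb.

Definition ptri := PComp (PRec PZero (pcomp2 padd psnd2 (PComp PSucc pfst_snd))) (PPair PZero PId).
Lemma eval_ptri Z x : eval Z ptri x (tri x).
Proof.
eapply eval_conv.
  by apply: (eval_PRec0 (F := fun=> 0) (G := fun a k w => w + k.+1)) => *; eval_prog.
by elim: x => /= [|x ->]; rewrite ?triS.
Qed.
#[export] Hint Resolve eval_ptri : evaldb.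

Definition ppair := pcomp2 padd (PComp ptri padd) PSnd.
Lemma eval_ppair Z a b : eval Z ppair (pair a b) (pair a b).
Proof. by rewrite /ppair; eval_prog. Qed.
#[export] Hint Resolve eval_ppair : evaldb.

(** * A fuel-bounded interpreter *)

(* [run p s x] is [v.+1] when [p] outputs [v] on [x], and [0] while the
   result is not yet known; the fuel [s] only bounds the searches of [PMu],
   and the oracle is read as empty.  A search state [st] is [0] while
   searching, [1] once an undetermined value was met, and [m.+2] once [m] is
   found; [mu_code] maps a run value [r] to the corresponding next state. *)
Definition mu_code (r k : nat) := (1 - sgn r) + eqb r 1 * k.+2.
Definition mu_step (R : nat -> nat) (a k st : nat) :=
  st + (1 - sgn st) * mu_code (R (pair a k)) k.
Definition rec_step (R : nat -> nat) (a k w : nat) := sgn w * R (pair a (pair k w.-1)).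

Fixpoint run (p : prog) (s x : nat) : nat :=
  match p with
  | PZero => 1
  | PSucc => x.+2
  | PId => x.+1
  | PFst => (pi1 x).+1
  | PSnd => (pi2 x).+1
  | POracle => 1
  | PComp f g => sgn (run g s x) * run f s (run g s x).-1
  | PPair f g => sgn (run f s x) * sgn (run g s x) * (pair (run f s x).-1 (run g s x).-1).+1
  | PRec f g => primrec (run f s) (rec_step (run g s)) (pi1 x) (pi2 x)
  | PMu f => (primrec (fun=> 0) (mu_step (run f s)) x s).-1
  end.

Lemma sgn_mul_eqS a b c : sgn a * b = c.+1 -> a = a.-1.+1 /\ b = c.+1.
Proof. by rewrite /sgn; case: a => //= a; lia. Qed.

Lemma mu_step_cases (R : nat -> nat) x j :
  let st := primrec (fun=> 0) (mu_step R) x j in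
  (st = 0 /\ forall i, i < j -> 2 <= R (pair x i)) \/ st = 1 \/
  (exists m, [/\ st = m.+2, m < j, R (pair x m) = 1 & forall i, i < m -> 2 <= R (pair x i)]).
Proof.
elim: j => [|j IH] /=; first by left.
rewrite {1 3 5}/mu_step.
case: IH => [[-> Hi]|[->|[m [-> Hmj Hm Hi]]]].
- rewrite /mu_code /eqb /sgn; case E: (R (pair x j)) => [|[|r]].
  + by right; left.
  + by right; right; exists j; split => //; lia.
  + left; split => // i; rewrite ltnS leq_eqVlt => /orP[/eqP->|/Hi//].
    by rewrite E.
- by right; left.
- by right; right; exists m; split => //; rewrite /sgn /=; lia.
Qed.

Lemma mu_step_found (R : nat -> nat) x v j :
  R (pair x v) = 1 -> (forall i, i < v -> 2 <= R (pair x i)) ->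
  primrec (fun=> 0) (mu_step R) x j = if j <= v then 0 else v.+2.
Proof.
move=> Hv Hi; elim: j => [|j IH] //=; rewrite IH /mu_step.
case: (ltngtP j v) => h.
- by have := Hi _ h; rewrite /mu_code /eqb /sgn; case: (R (pair x j)) => [|[|r]].
- by rewrite /sgn /=; lia.
- by rewrite h Hv /mu_code /eqb /sgn eqxx /=; lia.
Qed.

Lemma run_sound p s x v : run p s x = v.+1 -> eval empty_oracle p x v.
Proof.
elim: p s x v => [||||||f IHf g IHg|f IHf g IHg|f IHf g IHg|f IHf] s x v /=.
- by case=> <-; constructor.
- by case=> <-; constructor.
- by case=> <-; constructor.
- by case=> <-; apply: eval_pi1.
- by case=> <-; apply: eval_pi2.
- by case=> <-; constructor.
- by move=> /sgn_mul_eqS [E1 E2]; econstructor; [exact: IHg E1 | exact: IHf E2].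
- rewrite -mulnA => /sgn_mul_eqS [E1 /sgn_mul_eqS [E2 [<-]]].
  by constructor; [exact: IHf E1 | exact: IHg E2].
- rewrite -(pair_pi x) pi1_pair pi2_pair; move: (pi1 x) (pi2 x) => a n.
  elim: n v => [|n IHn] v /=; first by move=> H; constructor; exact: IHf H.
  rewrite {1}/rec_step => /sgn_mul_eqS [E1 E2].
  by econstructor; [exact: IHn E1 | exact: IHg E2].
- have [[-> _]|[->|[m [-> _ Hm Hi]]]] := mu_step_cases (run f s) x s => //= -[<-].
  constructor; first exact: IHf Hm.
  move=> i /Hi; case E: (run f s (pair x i)) => [|[|k]] //= _.
  by exists k; apply: IHf E.
Qed.

Lemma ex_bound_all_lt (P : nat -> nat -> Prop) n :
  (forall m, m < n -> exists s0, forall s, s0 <= s -> P m s) ->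
  exists s0, forall s, s0 <= s -> forall m, m < n -> P m s.
Proof.
elim: n => [|n IH] H; first by exists 0.
have [s1 H1] := IH (fun m hm => H m (ltnW hm)).
have [s2 H2] := H n (ltnSn n).
exists (maxn s1 s2) => s hs m; rewrite ltnS leq_eqVlt => /orP[/eqP->|hm].
- by apply: H2; lia.
- by apply: H1 => //; lia.
Qed.

Lemma run_complete p x v : eval empty_oracle p x v ->
  exists s0, forall s, s0 <= s -> run p s x = v.+1.
Proof.
elim: p x v => [||||||f IHf g IHg|f IHf g IHg|f IHf g IHg|f IHf] x v.
- by inversion 1; exists 0.
- by inversion 1; exists 0.
- by inversion 1; exists 0.
- by move=> /eval_PFst_inv ->; exists 0.
- by move=> /eval_PSnd_inv ->; exists 0.
- by move=> /eval_POracle_inv ->; exists 0; rewrite obit_false.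
- move=> /eval_PComp_inv [w [/IHg [s1 H1] /IHf [s2 H2]]].
  exists (maxn s1 s2) => s hs /=; rewrite H1 ?H2 //=; [rewrite /sgn|..]; lia.
- move=> /eval_PPair_inv [a [b [/IHf [s1 H1] /IHg [s2 H2] ->]]].
  exists (maxn s1 s2) => s hs /=; rewrite H1 ?H2 /=; [by rewrite /sgn /= !mul1n|..]; lia.
- rewrite -(pair_pi x) /= pi1_pair pi2_pair; move: (pi1 x) (pi2 x) => a n.
  elim: n v => [|n IHn] v.
  + by move=> /eval_PRec_inv [[_ /IHf [s1 H1]]|[k [w [//]]]]; exists s1.
  + move=> /eval_PRec_inv [[//]|[k [w [[<-] /IHn [s1 H1] /IHg [s2 H2]]]]].
    exists (maxn s1 s2) => s hs /=.
    rewrite /rec_step H1 ?H2 /=; [by rewrite /sgn mul1n|..]; lia.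
- move=> /eval_PMu_inv [/IHf [s1 H1] Hlt].
  have [s2 H2] : exists s2, forall s, s2 <= s -> forall m, m < v -> 2 <= run f s (pair x m).
    apply: ex_bound_all_lt => m /Hlt [k /IHf [s0 H0]].
    by exists s0 => s /H0 ->.
  exists (maxn (maxn s1 s2) v.+1) => s hs /=.
  rewrite (@mu_step_found (run f s) x v s) ?H1 //; last by apply: H2; lia.
  + by rewrite leqNgt (_ : v < s) //; lia.
  + by lia.
Qed.

(** * The interpreter as a program *)

Fixpoint pclock (p : prog) : prog :=
  match p with
  | PZero => pconst 1
  | PSucc => PComp PSucc (PComp PSucc PFst)
  | PId => PComp PSucc PFst
  | PFst => PComp PSucc pfst2
  | PSnd => PComp PSucc psnd_fst
  | POracle => pconst 1
  | PComp f g =>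
      pcomp2 pmul (PComp psgn (pclock g)) (PComp (pclock f) (PPair (PComp ppred (pclock g)) PSnd))
  | PPair f g =>
      pcomp2 pmul (pcomp2 pmul (PComp psgn (pclock f)) (PComp psgn (pclock g)))
        (PComp PSucc (pcomp2 ppair (PComp ppred (pclock f)) (PComp ppred (pclock g))))
  | PRec f g =>
      PComp (PRec (pclock f)
               (pcomp2 pmul (PComp psgn psnd2)
                  (PComp (pclock g) (PPair (PPair pfst2 (PPair pfst_snd (PComp ppred psnd2))) psnd_fst))))
        (PPair (PPair pfst2 PSnd) psnd_fst)
  | PMu f =>
      let r := PComp (pclock f) (PPair (PPair pfst2 pfst_snd) psnd_fst) in
      let mu_codeP := pcomp2 padd (pnot (PComp psgn r))
                        (pcomp2 pmul (pcomp2 peqb r (pconst 1)) (PComp PSucc (PComp PSucc pfst_snd))) in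
      PComp ppred
        (PComp (PRec PZero (pcomp2 padd psnd2 (pcomp2 pmul (pnot (PComp psgn psnd2)) mu_codeP)))
           (PPair PId PSnd))
  end.

Lemma eval_pclock Z p x s : eval Z (pclock p) (pair x s) (run p s x).
Proof.
elim: p x s => [||||||f IHf g IHg|f IHf g IHg|f IHf g IHg|f IHf] x s /=; try by eval_prog.
- eapply ev_comp; first by eauto 40 with evaldb.
  eapply eval_conv.
    apply: (eval_PRec (F := fun A => run f (pi2 A) (pi1 A))
                      (G := fun A k w => rec_step (run g (pi2 A)) (pi1 A) k w)).
    + by move=> A; rewrite -{1}(pair_pi A); exact: IHf.
    + by move=> A k w; eval_prog.
  by simpl_pi; elim: (pi2 x) => /= [|n ->]; simpl_pi.
- eapply eval_conv.
    eapply ev_comp; last exact: eval_ppred.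
    eapply ev_comp; first by eauto 40 with evaldb.
    apply: (eval_PRec (F := fun=> 0)
                      (G := fun A k st => mu_step (run f (pi2 A)) (pi1 A) k st)).
    + by move=> *; constructor.
    + by move=> A k w; rewrite /pnot /mu_step /mu_code; eval_prog.
  simpl_pi; congr _.-1.
  have shift n : primrec (fun=> 0) (fun A k st => mu_step (run f (pi2 A)) (pi1 A) k st)
                   (pair x s) n = primrec (fun=> 0) (mu_step (run f s)) x n.
    by elim: n => //= n ->; simpl_pi.
  exact: shift.
Qed.
#[export] Hint Resolve eval_pclock : evaldb.

Fixpoint agree_bit Z (s : seq (nat * bool)) : nat :=
  if s is (x, b) :: s' then eqb (obit Z x) b * agree_bit Z s' else 1.

Lemma agree_bit_le1 Z s : agree_bit Z s <= 1.
Proof. by elim: s => //= [[x b] s] IH; have := eqb_le1 (obit Z x) b; nia. Qed.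

Lemma agree_bitP Z s : agree_bit Z s = 1 <-> agrees s Z.
Proof.
rewrite /agrees; elim: s => [|[x b] s IH] /=; first by split => // _ ? ?.
have Ex : eqb (obit Z x) b = 1 <-> (Z x <-> b = true).
  case: (classic (Z x)) => h.
  - by rewrite obit_true // /eqb; case: b => //=; split => // [[/(_ h)]].
  - by rewrite obit_false // /eqb; case: b => //=; split => // [[_ /(_ erefl)]].
have hx := eqb_le1 (obit Z x) b; have hs := agree_bit_le1 Z s.
split.
- move=> H x' b'; rewrite in_cons => /orP[/eqP[-> ->]|hin]; first by apply/Ex; lia.
  have /IH hs1 : agree_bit Z s = 1 by lia.
  exact: hs1 hin.
- move=> H; have -> : eqb (obit Z x) b = 1 by apply/Ex; apply: H; rewrite mem_head.
  rewrite mul1n; apply/IH => x' b' hin; apply: H; by rewrite in_cons hin orbT.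
Qed.

(* [agree_run Z c] computes [agree_bit Z s] from [c = fun_code s]; the state is
   [<code of the unread part of s, bit so far>], and [c] bounds the length of [s]. *)
Definition agree_step (Z : nat -> Prop) (st : nat) :=
  pair (pi2 (pi1 st).-1)
       (pi2 st * (1 - sgn (pi1 st) *
                      (1 - eqb (obit Z (pi1 (pi1 (pi1 st).-1))) (pi2 (pi1 (pi1 st).-1))))).

Definition agree_run Z c := pi2 (iter c (agree_step Z) (pair c 1)).

Lemma fun_code_size s : size s <= fun_code s.
Proof. by elim: s => [|[x b] s IH] //=; have := pair_ge_r (pair x b) (fun_code s); lia. Qed.

Lemma iter_agree_step0 Z ok j : iter j (agree_step Z) (pair 0 ok) = pair 0 ok.
Proof.
by elim: j => //= j ->; rewrite /agree_step pi1_pair pi2_pair /sgn /=; congr pair; lia.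
Qed.

Lemma iter_agree_step Z s ok j : size s <= j ->
  iter j (agree_step Z) (pair (fun_code s) ok) = pair 0 (ok * agree_bit Z s).
Proof.
elim: s ok j => [|[x b] s IH] ok j /=; first by rewrite muln1 iter_agree_step0.
case: j => // j; rewrite ltnS => hj; rewrite iterSr {2}/agree_step; simpl_pi; rewrite /sgn /= IH //.
congr pair; have := eqb_le1 (obit Z x) b; case: (eqb _ _) => [|[|]] //= _; lia.
Qed.

Lemma agree_run_fun_code Z s : agree_run Z (fun_code s) = agree_bit Z s.
Proof. by rewrite /agree_run iter_agree_step ?fun_code_size // pi2_pair mul1n. Qed.

Definition pagree_step :=
  let head := PComp ppred PFst in
  pcomp2 ppair (PComp PSnd head)
    (pcomp2 pmul PSnd (pnot (pcomp2 pmul (PComp psgn PFst)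
       (pnot (pcomp2 peqb (PComp POracle (PComp PFst (PComp PFst head)))
                          (PComp PSnd (PComp PFst head))))))).
Definition pagree :=
  PComp PSnd (PComp (PRec (pcomp2 ppair PId (pconst 1)) (PComp pagree_step psnd2)) (PPair PId PId)).

Lemma eval_pagree_step Z st : eval Z pagree_step st (agree_step Z st).
Proof. by rewrite /pagree_step /pnot /agree_step; eval_prog. Qed.
#[export] Hint Resolve eval_pagree_step : evaldb.

Lemma eval_pagree Z c : eval Z pagree c (agree_run Z c).
Proof.
rewrite /pagree /agree_run -(primrec_iter (fun a => pair a 1)).
eapply ev_comp; last exact: eval_pi2.
eapply ev_comp; first by econstructor; constructor.
by apply: eval_PRec => *; eval_prog.
Qed.
#[export] Hint Resolve eval_pagree : evaldb.

(* [test_val Z P a t] is [0] iff [t = <<l, <c, a>>, s0>], where [P] accepts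
   [<l, <c, a>>] within fuel [s0] and [agree_run Z c = 1]. *)
Definition test_val Z P a t :=
  1 - sgn (run P (pi2 t) (pi1 t)) * eqb (pi2 (pi2 (pi1 t))) a
      * agree_run Z (pi1 (pi2 (pi1 t))).

Definition ptest (P : prog) := pnot (pcomp2 pmul
   (pcomp2 pmul (PComp psgn (PComp (pclock P) (PPair pfst_snd psnd2)))
               (pcomp2 peqb (PComp PSnd (PComp PSnd pfst_snd)) PFst))
   (PComp pagree (PComp PFst (PComp PSnd pfst_snd)))).

Lemma eval_ptest Z P a t : eval Z (ptest P) (pair a t) (test_val Z P a t).
Proof. by rewrite /ptest /pnot /test_val; eval_prog. Qed.

Definition psearch P := PMu (ptest P).
Definition pcolumn P n := PComp (psearch P) (PPair (pconst n) PId).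

Lemma pcolumn_halts Z P n y :
  (exists v, eval Z (pcolumn P n) y v) <-> exists t, test_val Z P (pair n y) t = 0.
Proof.
split.
- move=> [v /eval_PComp_inv [w [/eval_PPair_inv [a [b [ha hb ->]]] /eval_PMu_inv [h _]]]].
  have ea : a = n by apply: eval_fun ha (eval_pconst _ _ _).
  have eb : b = y by inversion hb.
  by subst; exists v; apply: eval_fun (eval_ptest _ _ _ _) h.
- move=> hex.
  have hex' : exists t, test_val Z P (pair n y) t == 0 by case: hex => t /eqP; exists t.
  have [m /eqP Pm Hmin] := find_ex_minn hex'.
  exists m; econstructor; first by econstructor; [exact: eval_pconst | constructor].
  constructor; first by rewrite -Pm; exact: eval_ptest.
  move=> i hi; exists 0.
  have : test_val Z P (pair n y) i != 0 by apply/negP => /Hmin; rewrite leqNgt hi.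
  have : test_val Z P (pair n y) i <= 1 by rewrite /test_val; lia.
  by case E: (test_val _ _ _ _) => [|[|]] // _ _; rewrite -E; exact: eval_ptest.
Qed.

(** * Computing the codes of the column programs *)

(* The Goedel code of a program is [CodeSeq.code] of the codes of the labels
   of a preorder traversal of its tree; [prog_labels] lists those labels. *)
Fixpoint prog_labels (p : prog) : seq nat :=
  match p with
  | PZero => [:: 1; 0] | PSucc => [:: 2; 0] | PId => [:: 3; 0]
  | PFst => [:: 4; 0] | PSnd => [:: 5; 0] | POracle => [:: 6; 0]
  | PComp f g => 7 :: prog_labels f ++ prog_labels g ++ [:: 0]
  | PPair f g => 8 :: prog_labels f ++ prog_labels g ++ [:: 0]
  | PRec f g => 9 :: prog_labels f ++ prog_labels g ++ [:: 0]
  | PMu f => 10 :: prog_labels f ++ [:: 0]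
  end.

Lemma encode_prog_enc p : GenTree.encode (prog_enc p) = map inl (prog_labels p).
Proof.
elim: p => //= [f IHf g IHg|f IHf g IHg|f IHf g IHg|f IHf];
  by rewrite ?IHf ?IHg -?cats1 ?cats0 ?map_cat ?catA.
Qed.

(* Locked so that no conversion check ever evaluates [2 ^ (2 ^ k)]. *)
Fact label_code_key : unit. Proof. by []. Qed.
Definition label_code := locked_with label_code_key (fun k : nat => 3 * 2 ^ (2 ^ k)).
Lemma label_codeE k : label_code k = 3 * 2 ^ (2 ^ k).
Proof. by rewrite /label_code unlock. Qed.

Lemma pickle_inl k : pickle (inl k : nat + nat) = label_code k.
Proof.
have -> : pickle (inl k : nat + nat) = CodeSeq.code [:: CodeSeq.code [:: k]; 0] by [].
by rewrite /CodeSeq.code /= label_codeE muln1 expn0 mulnC.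
Qed.

Fact lcode_key : unit. Proof. by []. Qed.
Definition lcode := locked_with lcode_key (fun l : seq nat => CodeSeq.code (map label_code l)).
Fact lwidth_key : unit. Proof. by []. Qed.
Definition lwidth :=
  locked_with lwidth_key (fun l : seq nat => sumn (map (fun a => (label_code a).+1) l)).

Lemma lcode_nil : lcode [::] = 0. Proof. by rewrite /lcode unlock. Qed.
Lemma lcode_cons a l : lcode (a :: l) = 2 ^ label_code a * (lcode l).*2.+1.
Proof. by rewrite /lcode unlock. Qed.
Lemma lwidth_nil : lwidth [::] = 0. Proof. by rewrite /lwidth unlock. Qed.
Lemma lwidth_cons a l : lwidth (a :: l) = (label_code a).+1 + lwidth l.
Proof. by rewrite /lwidth unlock. Qed.
Lemma lwidth_cat l1 l2 : lwidth (l1 ++ l2) = lwidth l1 + lwidth l2.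
Proof. by rewrite /lwidth unlock map_cat sumn_cat. Qed.

Lemma lcode_cat l1 l2 : lcode (l1 ++ l2) = lcode l1 + 2 ^ lwidth l1 * lcode l2.
Proof.
elim: l1 => [|a l IH] /=; first by rewrite lcode_nil lwidth_nil mul1n.
by rewrite !lcode_cons IH lwidth_cons expnD expnS; lia.
Qed.

Lemma pickle_prog p : pickle p = lcode (prog_labels p).
Proof.
have -> : pickle p = CodeSeq.code (map pickle (GenTree.encode (prog_enc p))) by [].
rewrite encode_prog_enc -map_comp /lcode unlock; congr CodeSeq.code.
by apply: eq_map => k /=; rewrite pickle_inl.
Qed.

Definition plabel_code a := pcomp2 pmul (pconst 3) (PComp pexp2 (PComp pexp2 (pconst a))).
Lemma eval_plabel_code Z a x : eval Z (plabel_code a) x (label_code a).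
Proof. by rewrite /plabel_code label_codeE; eval_prog. Qed.
#[export] Hint Resolve eval_plabel_code : evaldb.

Fixpoint plcode (l : seq nat) : prog :=
  if l is a :: l' then
    pcomp2 pmul (PComp pexp2 (plabel_code a)) (PComp PSucc (pcomp2 padd (plcode l') (plcode l')))
  else pconst 0.
Fixpoint plwidth (l : seq nat) : prog :=
  if l is a :: l' then pcomp2 padd (PComp PSucc (plabel_code a)) (plwidth l') else pconst 0.

Lemma eval_plcode Z l x : eval Z (plcode l) x (lcode l).
Proof.
elim: l => [|a l IH] /=; first by rewrite lcode_nil; constructor.
by rewrite lcode_cons; eval_prog.
Qed.
Lemma eval_plwidth Z l x : eval Z (plwidth l) x (lwidth l).
Proof.
elim: l => [|a l IH] /=; first by rewrite lwidth_nil; constructor.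
by rewrite lwidth_cons; eval_prog.
Qed.
#[export] Hint Resolve eval_plcode eval_plwidth : evaldb.

(* [pconst n.+1] is [PComp PSucc (pconst n)]: its labels are those of [pconst n]
   wrapped between [[:: 7; 2; 0]] and [[:: 0]]. *)
Definition pconst_labels_step :=
  pcomp2 ppair
    (pcomp2 padd (plcode [:: 7; 2; 0])
       (pcomp2 pmul (PComp pexp2 (plwidth [:: 7; 2; 0]))
          (pcomp2 padd (PComp PFst psnd2)
             (pcomp2 pmul (PComp pexp2 (PComp PSnd psnd2)) (plcode [:: 0])))))
    (pcomp2 padd (pcomp2 padd (plwidth [:: 7; 2; 0]) (PComp PSnd psnd2)) (plwidth [:: 0])).
Definition pconst_labels :=
  PComp (PRec (pcomp2 ppair (plcode [:: 1; 0]) (plwidth [:: 1; 0])) pconst_labels_step)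
    (PPair PZero PId).

Lemma eval_pconst_labels Z n :
  eval Z pconst_labels n (pair (lcode (prog_labels (pconst n))) (lwidth (prog_labels (pconst n)))).
Proof.
eapply eval_conv.
  apply: (eval_PRec0 (F := fun=> pair (lcode [:: 1; 0]) (lwidth [:: 1; 0]))
    (G := fun a k w => pair (lcode [:: 7; 2; 0] + 2 ^ lwidth [:: 7; 2; 0]
                                   * (pi1 w + 2 ^ pi2 w * lcode [:: 0]))
                            (lwidth [:: 7; 2; 0] + pi2 w + lwidth [:: 0]))).
  - by move=> a; eval_prog.
  - by move=> a k w; rewrite /pconst_labels_step; eval_prog.
elim: n => [|n IH] //; rewrite [primrec _ _ _ _]/= IH; simpl_pi.
have -> : prog_labels (pconst n.+1) = [:: 7; 2; 0] ++ prog_labels (pconst n) ++ [:: 0] by [].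
by rewrite !lcode_cat !lwidth_cat; congr pair; lia.
Qed.
#[export] Hint Resolve eval_pconst_labels : evaldb.

Definition pcolumn_prefix P := 7 :: prog_labels (psearch P) ++ [:: 8].
Definition pcolumn_suffix := [:: 3; 0; 0; 0].

Lemma prog_labels_pcolumn P n :
  prog_labels (pcolumn P n) = pcolumn_prefix P ++ prog_labels (pconst n) ++ pcolumn_suffix.
Proof. by rewrite /= -!catA. Qed.

Definition pcolumn_code P :=
  pcomp2 padd (plcode (pcolumn_prefix P))
    (pcomp2 pmul (PComp pexp2 (plwidth (pcolumn_prefix P)))
       (pcomp2 padd (PComp PFst pconst_labels)
          (pcomp2 pmul (PComp pexp2 (PComp PSnd pconst_labels)) (plcode pcolumn_suffix)))).

Lemma eval_pcolumn_code Z P n : eval Z (pcolumn_code P) n (pickle (pcolumn P n)).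
Proof. by rewrite pickle_prog prog_labels_pcolumn !lcode_cat /pcolumn_code; eval_prog. Qed.

(** * The set generated by the axioms *)

Lemma fun_code_inj : injective fun_code.
Proof.
elim=> [|[x b] s IH] [|[x' b'] s'] //= [/pair_inj [/pair_inj [-> hb] /IH ->]].
by case: b b' hb => [] [].
Qed.

Lemma axiom_code_inj l s y l' s' y' :
  axiom_code l s y = axiom_code l' s' y' -> [/\ l = l', s = s' & y = y'].
Proof. by move=> /pair_inj [-> /pair_inj [/fun_code_inj -> ->]]. Qed.

Lemma agrees_ext s (C1 C2 : nat -> Prop) :
  (forall x b, (x, b) \in s -> (C1 x <-> C2 x)) -> (agrees s C1 <-> agrees s C2).
Proof. by move=> H; split => H' x b hin; rewrite -(H' x b hin) (H x b hin). Qed.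

Lemma agrees_below s (C : nat -> Prop) n :
  (forall x b, (x, b) \in s -> pi1 x < n) -> (agrees s (below C n) <-> agrees s C).
Proof. by move=> H; apply: agrees_ext => x b /H hx; rewrite /below col_lt_iff; tauto. Qed.

Section Generated.

Variable A : nat -> Prop.
Hypothesis A_valid : forall n, A n ->
  exists l sigma y, n = axiom_code l sigma y /\ valid_axiom l sigma y.

Lemma axiom_columns l s y : A (axiom_code l s y) ->
  l <= pi1 y /\ forall x b, (x, b) \in s -> pi1 x < l.
Proof.
move=> /[dup] /A_valid [l' [s' [y' [/axiom_code_inj [<- <- <-] hv]]]] _.
case: hv => [_ [hs /col_ge_iff hy]]; split => // x b /hs /col_lt_iff //.
Qed.

Fixpoint stage k : nat -> Prop :=
  if k is k'.+1 then fun y => exists l s, A (axiom_code l s y) /\ agrees s (stage k')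
  else fun _ => False.

Definition Cax y := stage (pi1 y).+1 y.

Lemma stage_Cax k y : pi1 y < k -> (stage k y <-> Cax y).
Proof.
elim/ltn_ind: k y => -[|k] IH y //= hy; rewrite /Cax /=.
split => -[l [s [hA hag]]]; exists l, s; split => //;
  have [hl hs] := axiom_columns hA; apply: (iffLR (agrees_ext _)) hag => x b /hs hx;
  by rewrite (IH k) // ?(IH (pi1 y)) //; lia.
Qed.

Lemma Cax_generated : generated_by A Cax.
Proof.
move=> y; rewrite {1}/Cax /=.
split => -[l [s [hA hag]]]; exists l, s; split => //;
  have [hl hs] := axiom_columns hA; apply: (iffLR (agrees_ext _)) hag => x b /hs hx;
  by rewrite stage_Cax //; lia.
Qed.

Lemma generated_unique C1 C2 : generated_by A C1 -> generated_by A C2 ->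
  forall x, C1 x <-> C2 x.
Proof.
move=> h1 h2.
suff H m x : pi1 x < m -> (C1 x <-> C2 x) by move=> x; apply: (H (pi1 x).+1).
elim: m x => [|m IH] x // hx.
rewrite h1 h2; split => -[l [s [hA hag]]]; exists l, s; split => //;
  have [hl hs] := axiom_columns hA; apply: (iffLR (agrees_ext _)) hag => x' b /hs hx';
  by rewrite IH //; lia.
Qed.

Lemma column_test_iff P (P_enum : forall c, A c <-> exists s, run P s c <> 0)
  C (C_gen : generated_by A C) n y :
  C (pair n y) <-> exists t, test_val (below C n) P (pair n y) t = 0.
Proof.
split.
- move/C_gen => [l [s [hA hag]]].
  have [hl hs] := axiom_columns hA; rewrite pi1_pair in hl.
  have [s0 hs0] := (P_enum _).1 hA.
  exists (pair (axiom_code l s (pair n y)) s0).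
  rewrite /test_val /axiom_code; simpl_pi; rewrite -/(axiom_code l s (pair n y)).
  rewrite agree_run_fun_code.
  have -> : agree_bit (below C n) s = 1.
    by apply/agree_bitP/agrees_below => // x b /hs; lia.
  by rewrite /eqb eqxx; move: hs0; rewrite /sgn; case: (run _ _ _).
- move=> [t ht].
  have : 0 < sgn (run P (pi2 t) (pi1 t)) * eqb (pi2 (pi2 (pi1 t))) (pair n y) *
               agree_run (below C n) (pi1 (pi2 (pi1 t))) by rewrite /test_val in ht; lia.
  rewrite !muln_gt0 => /andP [/andP [h1 h2] h3].
  have hA : A (pi1 t).
    by apply/P_enum; exists (pi2 t); move: h1; rewrite /sgn; case: (run _ _ _).
  have [l [s [y' [Ec _]]]] := A_valid hA.
  move: h2 h3 hA; rewrite Ec /axiom_code; simpl_pi; rewrite -/(axiom_code l s y').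
  rewrite /eqb; case: eqP => // -> _; rewrite agree_run_fun_code => h3 hA.
  apply/C_gen; exists l, s; split => //.
  have [hl hs] := axiom_columns hA; rewrite pi1_pair in hl.
  apply/(agrees_below _ (n := n)); first by move=> x b /hs; lia.
  by apply/agree_bitP; have := agree_bit_le1 (below C n) s; lia.
Qed.

End Generated.

Lemma ce_run A : ce A -> exists P, forall c, A c <-> exists s, run P s c <> 0.
Proof.
case=> e he; exists (phi e) => c; rewrite he /W; split.
- by move=> [v /run_complete [s0 H]]; exists s0; rewrite H.
- move=> [s H]; exists (run (phi e) s c).-1; apply: (run_sound (s := s)).
  by move: H; case: (run _ s c).
Qed.

Theorem lemma2p2 (A : nat -> Prop)
  (hAce : ce A)
  (hAax : forall n, A n ->
     exists l sigma y, n = axiom_code l sigma y /\ valid_axiom l sigma y) :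
  (exists C, generated_by A C /\ REA_omega C) /\
  (forall C1 C2, generated_by A C1 -> generated_by A C2 -> forall x, C1 x <-> C2 x).
Proof.
split; last exact: generated_unique.
have [P P_enum] := ce_run hAce.
exists (Cax A); split; first exact: Cax_generated.
exists (fun n => pickle (pcolumn P n)); split.
- by exists (pickle (pcolumn_code P)) => n; rewrite /phi pickleK; exact: eval_pcolumn_code.
- move=> n y; rewrite /column /W /phi pickleK /= pcolumn_halts.
  exact/column_test_iff/Cax_generated.
Qed.
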